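(* The tropicalization $\operatorname{trop}(\mathrm{PM}^+_n(\mathbb{R}))\subseteq\mathbb{R}^{2^{[n]}}$ of the image of the cone of $n\times n$ real symmetric positive definite matrices under the principal minor map is contained in the set of $M^\natural$-concave functions $2^{[n]}\to\mathbb{R}$.
   Context: $\mathrm{PM}^+_n(\mathbb{R})=\{(A_S)_{S\subseteq[n]} : A \text{ real symmetric positive definite } n\times n\}\subseteq\mathbb{R}_{+}^{2^{[n]}}$, where $A_S$ is the principal minor on rows/columns $S$ ($A_\emptyset=1$). For $\mathcal{S}\subseteq\mathbb{R}_+^N$, $\operatorname{trop}(\mathcal{S})=\lim_{t\to\infty}\{(\log_t x_1,\dots,\log_t x_N): x\in\mathcal{S}\}$ (logarithmic limit set). Vectors in $\mathbb{R}^{2^{[n]}}$ are regarded as functions $F:2^{[n]}\to\mathbb{R}$. $F$ is $M^\natural$-concave if for all $S,T\subseteq[n]$ and all $i\in S\setminus T$, either $F(S)+F(T)\le F(S\setminus\{i\})+F(T\cup\{i\})$, or there exists $j\in T\setminus S$ with $F(S)+F(T)\le F((S\setminus\{i\})\cup\{j\})+F((T\setminus\{j\})\cup\{i\})$. *)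

From HB Require Import structures.
From mathcomp Require Import all_boot all_order all_algebra.
From mathcomp Require Import all_classical all_reals all_analysis.
Set Implicit Arguments. Unset Strict Implicit. Unset Printing Implicit Defensive.
Import Order.TTheory GRing.Theory Num.Theory numFieldNormedType.Exports.
Local Open Scope ring_scope.
Local Open Scope classical_set_scope.

Definition posdef (R : realType) (n : nat) (A : 'M[R]_n) : Prop :=
  A^T = A /\ forall x : 'rV[R]_n, x != 0 -> 0 < (x *m A *m x^T) 0 0.

Definition principal_submx (R : realType) (n : nat) (A : 'M[R]_n) (S : {set 'I_n})
  : 'M[R]_#|S| := \matrix_(i < #|S|, j < #|S|) A (enum_val i) (enum_val j).

(* Principal minor A_S; A_emptyset = det of the 0x0 matrix = 1. *)
Definition principal_minor (R : realType) (n : nat) (A : 'M[R]_n) (S : {set 'I_n}) : R :=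
  \det (principal_submx A S).

Definition PMplus (R : realType) (n : nat) : set ({set 'I_n} -> R) :=
  [set F | exists A : 'M[R]_n, posdef A /\ F = principal_minor A].

Definition logb (R : realType) (t x : R) : R := ln x / ln t.

(* Logarithmic limit set of S (a subset of the positive orthant indexed by a
   finite type I): the (upper Kuratowski) limit of log_t(S) as t -> +oo, i.e.
   points y such that y = lim_k log_{t_k}(x_k) for some x_k in S, t_k -> +oo. *)
Definition trop (R : realType) (I : finType) (S : set (I -> R)) : set (I -> R) :=
  [set y : I -> R | exists (t : R^nat) (x : nat -> I -> R),
      (t @ \oo --> +oo%R) /\ (forall k, S (x k)) /\
      (forall i : I, ((fun k => logb (t k) (x k i)) : R^nat) @ \oo --> (y i : R))].

Definition Mnat_concave (R : realType) (n : nat) (F : {set 'I_n} -> R) : Prop :=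
  forall (S T : {set 'I_n}) (i : 'I_n), i \in S :\: T ->
    (F S + F T <= F (S :\ i) + F (i |: T)) \/
    (exists2 j : 'I_n, j \in T :\: S &
       F S + F T <= F (j |: (S :\ i)) + F (i |: (T :\ j))).

From mathcomp Require Import all_boot all_order all_algebra all_fingroup.
From mathcomp Require Import all_classical all_reals all_analysis.
From mathcomp Require Import ring lra.
Import Order.TTheory GRing.Theory Num.Theory numFieldNormedType.Exports.
Set Implicit Arguments. Unset Strict Implicit. Unset Printing Implicit Defensive.
Local Open Scope ring_scope.

(* For a positive definite A, write '[u, v] = u A v^T and let d_X(y)
   (sqdist X y) be the squared '[.]-distance from y to the span of the
   coordinate vectors e_x, x in X.  Schur complements give
   A_{X+i} = d_X(e_i) A_X.
   Given i in S \ T, approximate e_i from S - i by the '[.]-projection of e_i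
   onto T, in which every coordinate e_j with j in T \ S is replaced by its own
   projection onto S - i; bounding the error term by term yields
     A_S A_T <= C_n (A_{S-i} A_{T+i} + sum_{j in T\S} A_{S-i+j} A_{T-j+i})
   with C_n depending only on n.  Hence one product on the right is at least
   A_S A_T / ((n+1) C_n); taking log_t and letting t -> oo, the constant
   disappears and the M-natural exchange inequality survives in the limit. *)

Lemma det_mxsub_inj (R : comPzRingType) m n (e : m = n) (h : 'I_m -> 'I_n)
    (h_inj : injective h) (M : 'M[R]_n) :
  \det (mxsub h h M) = \det M.
Proof.
case: n / e h h_inj M => h h_inj M; pose s := perm h_inj.
have -> : mxsub h h M = row_perm s (col_perm s M).
  by apply/matrixP => a b; rewrite !mxE !permE.
rewrite row_permE col_permE !det_mulmx !det_perm odd_permV.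
by rewrite mulrCA -expr2 sqrr_sign mulr1.
Qed.

Lemma det_eq_mul_cofactor (R : comPzRingType) n (M : 'M[R]_n) i (y : 'rV[R]_n) q :
  y 0 i = 1 -> y *m M = q *: 'e_i -> \det M = q * cofactor M i i.
Proof.
move=> yi1 yM; have := congr1 (fun N => (N *m \adj M) 0 i) yM.
by rewrite /= -mulmxA mul_mx_adj mul_mx_scalar -scalemxAl -rowE !mxE yi1 mulr1.
Qed.

Section Padding.
Variables (R : comPzRingType) (n : nat).
Implicit Types (A : 'M[R]_n) (X : {set 'I_n}) (u v : 'rV[R]_n).

Definition coord_mx X : 'M[R]_n := diag_mx (\row_a (a \in X)%:R).

(* A on X x X and the identity elsewhere: an n x n stand-in for the principal
   submatrix A_X with the same determinant (principal_minorE). *)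
Definition pad_submx A X := coord_mx X *m A *m coord_mx X + (1%:M - coord_mx X).

Lemma pad_submxE A X a b :
  pad_submx A X a b = if (a \in X) && (b \in X) then A a b else (a == b)%:R.
Proof.
rewrite /pad_submx mul_mx_diag mul_diag_mx !mxE.
case: (eqVneq a b) => [<-|ab]; case: (a \in X); case: (b \in X);
  by rewrite /= ?mulr1 ?mulr0 ?mul1r ?mul0r ?subrr ?subr0 ?add0r ?addr0.
Qed.

Lemma mul_coord_mxE m (M : 'M[R]_(m, n)) X a b :
  (M *m coord_mx X) a b = M a b * (b \in X)%:R.
Proof. by rewrite mul_mx_diag mxE [(\row__ _) _ _]mxE. Qed.

Lemma coord_mx_mul_compl X : coord_mx X *m (1%:M - coord_mx X) = 0.
Proof.
suff PP : coord_mx X *m coord_mx X = coord_mx X by rewrite mulmxBr mulmx1 PP subrr.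
rewrite mulmx_diag; congr diag_mx; apply/rowP => b; rewrite !mxE.
by case: (b \in X); rewrite ?mulr1 ?mulr0.
Qed.

Definition supported X (u : 'rV[R]_n) := forall a, a \notin X -> u 0 a = 0.

Lemma supportedP X u : supported X u <-> u *m coord_mx X = u.
Proof.
split=> [uX|<- a aX]; last by rewrite mul_coord_mxE (negPf aX) mulr0.
apply/matrixP => a b; rewrite mul_coord_mxE (ord1 a).
by case: (boolP (b \in X)) => [_|bX]; rewrite ?mulr1 // mulr0 uX.
Qed.

Lemma supportedB X u v : supported X u -> supported X v -> supported X (u - v).
Proof. by move=> uX vX a aX; rewrite !mxE uX // vX // subrr. Qed.

Lemma supportedS X (Y : {set 'I_n}) u : X \subset Y -> supported X u -> supported Y u.
Proof. by move=> XY uX a aY; apply: uX; apply: contraNN aY; apply: (fintype.subsetP XY). Qed.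

Lemma supported_delta X j : j \in X -> supported X 'e_j.
Proof.
move=> jX a aX; have aj : a != j by apply: contraNneq aX => ->.
by rewrite mxE (negPf aj) andbF.
Qed.

Lemma supported_sum_delta X u : supported X u -> u = \sum_(j in X) u 0 j *: 'e_j.
Proof.
move=> uX; rewrite {1}[u]row_sum_delta (bigID (mem X)) /= [X in _ + X]big1 ?addr0 //.
by move=> j jX; rewrite uX ?scale0r.
Qed.

Lemma pad_submx_compl A X : pad_submx A X *m (1%:M - coord_mx X) = 1%:M - coord_mx X.
Proof.
rewrite /pad_submx mulmxDl -mulmxA coord_mx_mul_compl mulmx0 add0r.
by rewrite mulmxBl mul1mx coord_mx_mul_compl subr0.
Qed.

Lemma supported_mul_pad_submx A X u :
  supported X u -> u *m pad_submx A X = u *m A *m coord_mx X.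
Proof.
move/supportedP => uP.
by rewrite /pad_submx mulmxDr mulmxBr mulmx1 uP !mulmxA uP subrr addr0.
Qed.

Lemma det_pad_submx0 A : \det (pad_submx A finset.set0) = 1.
Proof.
rewrite -[RHS](det1 R n); congr (\det _).
by apply/matrixP => a b; rewrite pad_submxE inE mxE.
Qed.

Lemma det_pad_submx_cofactor A X i : i \notin X ->
  \det (pad_submx A X) = cofactor (pad_submx A (i |: X)) i i.
Proof.
move=> iX; rewrite (expand_det_row _ i) (bigD1 i) //= big1 ?addr0 => [|j ji].
  rewrite pad_submxE (negPf iX) eqxx mul1r /cofactor; congr (_ * _).
  congr (\det _); apply/matrixP => a b.
  have minorE (M : 'M[R]_n) : row' i (col' i M) a b = M (lift i a) (lift i b).
    by rewrite !mxE.
  rewrite !minorE !pad_submxE !in_setU1.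
  by rewrite ![lift i _ == i]eq_sym !(negPf (neq_lift _ _)).
by rewrite pad_submxE (negPf iX) eq_sym (negPf ji) mul0r.
Qed.

End Padding.

Arguments coord_mx {R n} X.

Lemma principal_minorE (R : realType) n (A : 'M[R]_n) X :
  principal_minor A X = \det (pad_submx A X).
Proof.
have e : (#|X| + #|~: X|)%N = n by rewrite cardsC card_ord.
pose h (u : 'I_(#|X| + #|~: X|)) : 'I_n :=
  match fintype.split u with inl a => enum_val a | inr b => enum_val b end.
have enum_valC (b : 'I_#|~: X|) : enum_val b \notin X.
  by rewrite -finset.in_setC; apply: enum_valP.
have h_inj : injective h.
  move=> u v; rewrite -(splitK u) -(splitK v) /h !unsplitK.
  case: (fintype.split u) => a; case: (fintype.split v) => b /=.
  - by move/enum_val_inj => ->.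
  - by move=> E; have := enum_valC b; rewrite -E enum_valP.
  - by move=> E; have := enum_valC a; rewrite E enum_valP.
  - by move/enum_val_inj => ->.
rewrite -(det_mxsub_inj e h_inj).
suff -> : mxsub h h (pad_submx A X) = block_mx (principal_submx A X) 0 0 1%:M.
  by rewrite det_ublock det1 mulr1.
apply/matrixP => u v; rewrite -(splitK u) -(splitK v) mxE pad_submxE /h !unsplitK.
case: (fintype.split u) => a; case: (fintype.split v) => b /=.
- by rewrite block_mxEul mxE !enum_valP.
- rewrite block_mxEur mxE (negPf (enum_valC b)) andbF.
  by case: eqP => // E; have := enum_valC b; rewrite -E enum_valP.
- rewrite block_mxEdl mxE (negPf (enum_valC a)).
  by case: eqP => // E; have := enum_valC a; rewrite E enum_valP.
- by rewrite block_mxEdr mxE (negPf (enum_valC a)) (inj_eq enum_val_inj).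
Qed.

Definition approx_Mnat_logconcave (R : realFieldType) n (K : R)
    (G : {set 'I_n} -> R) :=
  forall S T i, i \in S :\: T ->
    G S * G T <= K * (G (S :\ i) * G (i |: T)) \/
    exists2 j, j \in T :\: S & G S * G T <= K * (G (j |: (S :\ i)) * G (i |: (T :\ j))).

Lemma le_card_mul_summand (R : realFieldType) (I : finType) (J : {pred I}) (L a : R)
    (b : I -> R) :
  0 <= a -> L <= a + \sum_(j in J) b j ->
  L <= #|I|.+1%:R * a \/ exists2 j, j \in J & L <= #|I|.+1%:R * b j.
Proof.
move=> a0 hL; set N : R := #|I|.+1%:R.
have [|aL] := lerP L (N * a); first by left.
have [|nb] := pselect (exists2 j, j \in J & L <= N * b j); first by right.
have L0 : 0 < L by apply: le_lt_trans aL; rewrite mulr_ge0.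
have bL : \sum_(j in J) N * b j <= L * #|I|%:R.
  apply: le_trans (_ : \sum_(j in J) L <= _).
    apply: ler_sum => j jJ; rewrite leNgt; apply/negP => bL.
    by apply: nb; exists j => //; apply: ltW.
  by rewrite sumr_const mulr_natr ler_pMn2l // max_card.
exfalso; have := ler_wpM2l (ler0n R #|I|.+1) hL; rewrite mulrDr mulr_sumr -/N.
have NE : N = #|I|%:R + 1 by rewrite /N -addn1 natrD.
rewrite NE in aL bL *; nra.
Qed.

Section PositiveDefiniteForm.
Variables (R : realFieldType) (n : nat) (A : 'M[R]_n).
Hypotheses (symA : A^T = A)
  (posA : forall u : 'rV[R]_n, u != 0 -> 0 < (u *m A *m u^T) 0 0).
Implicit Types (S X T : {set 'I_n}) (u v w y z : 'rV[R]_n).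

Local Notation "''[' u , v ]" := (form idfun A u%R v%R) : ring_scope.
Local Notation "''[' u ]" := '[u, u] : ring_scope.

Lemma formE u v : '[u, v] = (u *m A *m v^T) 0 0.
Proof. by rewrite /form map_mx_id. Qed.

Lemma form_e u b : '[u, 'e_b] = (u *m A) 0 b.
Proof. by rewrite formE trmx_delta -colE !mxE. Qed.

Lemma form_sym u v : '[u, v] = '[v, u].
Proof.
have A_sym : A \is (false, idfun : {rmorphism R -> R}).-sesqui.
  by rewrite sesquiE expr0 scale1r map_mx_id // symA.
by rewrite (formC (theta := idfun) (fun x : R => erefl x) A_sym) mul1r.
Qed.

Lemma form_ge0 u : 0 <= '[u].
Proof.
by have [->|u0] := eqVneq u 0; rewrite ?form0l // ltW // formE posA.
Qed.

Lemma formDE u v : '[u + v] = '[u] + '[v] + 2 * '[u, v].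
Proof. by rewrite formDl !formDr (form_sym v u); ring. Qed.

Lemma formD_le u v : '[u + v] <= 2 * '[u] + 2 * '[v].
Proof.
have := form_ge0 (u - v); rewrite formDE formNl !formNr opprK formDE => h.
lra.
Qed.

Lemma form_sum_le (I : finType) (P : pred I) (F : I -> 'rV[R]_n) :
  '[\sum_(j | P j) F j] <= 2 ^+ #|I| * \sum_(j | P j) '[F j].
Proof.
have seq_le r : '[\sum_(j <- r | P j) F j] <= 2 ^+ size r * \sum_(j <- r | P j) '[F j].
  elim: r => [|a r IH]; first by rewrite !big_nil form0l mulr0.
  have s0 : 0 <= \sum_(j <- r | P j) '[F j] by apply: sumr_ge0 => j _; apply: form_ge0.
  have K1 : 1 <= 2 ^+ size r :> R by rewrite exprn_ege1 // ler1n.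
  have Ks0 : 0 <= 2 ^+ size r * \sum_(j <- r | P j) '[F j] by rewrite mulr_ge0 ?exprn_ge0.
  rewrite !big_cons exprS -mulrA; case: (P a) => /=.
    apply: le_trans (formD_le _ _) _; rewrite -mulrDr ler_pM2l // mulrDr.
    by rewrite lerD // ler_peMl ?form_ge0.
  by apply: le_trans IH _; rewrite ler_peMl // ler1n.
suff -> : #|I| = size (index_enum I) by apply: seq_le.
by rewrite -(card_uniqP (index_enum_uniq I)); apply: eq_card => j; rewrite mem_index_enum.
Qed.

Definition orth_coord X z := forall b, b \in X -> '[z, 'e_b] = 0.

Lemma form_orth_supported X z w : orth_coord X z -> supported X w -> '[z, w] = 0.
Proof.
move=> zX wX; rewrite formE mxE big1 // => b _; rewrite [w^T _ _]mxE.
by case: (boolP (b \in X)) => [/zX|/wX ->]; rewrite ?mulr0 // form_e => ->; rewrite mul0r.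
Qed.

Lemma formD_orth X z w : orth_coord X z -> supported X w -> '[z + w] = '[z] + '[w].
Proof. by move=> zX wX; rewrite formDE (form_orth_supported zX wX) mulr0 addr0. Qed.

Lemma pad_submx_unit X : pad_submx A X \in unitmx.
Proof.
rewrite unitmxE unitfE; apply/negP => /det0P [v v0 vM].
have vX : supported X v.
  apply/supportedP/eqP; rewrite eq_sym -subr_eq0 -[v in v - _]mulmx1 -mulmxBr.
  by rewrite -(pad_submx_compl A X) mulmxA vM mul0mx.
have vo : orth_coord X v.
  move=> k kX; have /matrixP/(_ 0 k) := vM.
  by rewrite supported_mul_pad_submx // mul_coord_mxE kX mulr1 form_e => ->; rewrite mxE.
by have := posA v0; rewrite -formE (form_orth_supported vo vX) ltxx.
Qed.

Definition proj X y := y *m A *m coord_mx X *m invmx (pad_submx A X).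

Lemma proj_mul_pad_submx X y : proj X y *m pad_submx A X = y *m A *m coord_mx X.
Proof. by rewrite mulmxKV ?pad_submx_unit. Qed.

Lemma proj_supported X y : supported X (proj X y).
Proof.
apply/supportedP/eqP; rewrite eq_sym -subr_eq0 -[X in X - _]mulmx1 -mulmxBr.
rewrite -(pad_submx_compl A X) mulmxA proj_mul_pad_submx.
by rewrite -(mulmxA _ (coord_mx X)) coord_mx_mul_compl mulmx0.
Qed.

Lemma proj_orth X y : orth_coord X (y - proj X y).
Proof.
move=> b bX; rewrite formDl formNl !form_e.
have /matrixP/(_ 0 b) := proj_mul_pad_submx X y.
rewrite supported_mul_pad_submx; last exact: proj_supported.
by rewrite !mul_coord_mxE bX !mulr1 => ->; rewrite subrr.
Qed.

Definition sqdist X y := '[y - proj X y].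

Lemma sqdist_le X y v : supported X v -> sqdist X y <= '[y - v].
Proof.
move=> vX; have -> : y - v = (y - proj X y) + (proj X y - v) by rewrite addrA subrK.
rewrite (formD_orth (@proj_orth X y)) ?lerDl ?form_ge0 //.
by apply: supportedB vX; apply: proj_supported.
Qed.

(* y := e_i - proj X e_i satisfies y *m pad_submx A (i |: X) = '[y] *: e_i, so
   Cramer's rule reduces the determinant to the (i, i) cofactor. *)
Lemma det_pad_submx_setU1 X i : i \notin X ->
  \det (pad_submx A (i |: X)) = sqdist X 'e_i * \det (pad_submx A X).
Proof.
move=> iX; rewrite (det_pad_submx_cofactor A iX) /sqdist.
have pX := @proj_supported X 'e_i; have yX := @proj_orth X 'e_i.
move: (proj X 'e_i) pX yX => p pX yX.
apply: (det_eq_mul_cofactor (y := 'e_i - p)); first by rewrite !mxE !eqxx (pX i iX) subr0.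
rewrite supported_mul_pad_submx; last first.
  move=> a; rewrite in_setU1 negb_or => /andP [ai aX].
  by rewrite !mxE (negPf ai) pX // subrr.
apply/matrixP => a b; rewrite (ord1 a) mul_coord_mxE -form_e !mxE in_setU1.
have [->|bi] /= := eqVneq b i.
  by rewrite formDr formNr (form_orth_supported yX pX) subr0 !mulr1.
by case: (boolP (b \in X)) => [/yX ->|_]; rewrite ?mulr0 ?mul0r.
Qed.

Lemma sqdist_gt0 X i : i \notin X -> 0 < sqdist X 'e_i.
Proof.
move=> iX; rewrite /sqdist formE; apply: posA.
have /(_ i iX) := @proj_supported X 'e_i; move: (proj X 'e_i) => p pi0.
by apply/eqP => /matrixP/(_ 0 i)/eqP; rewrite !mxE !eqxx pi0 subr0 oner_eq0.
Qed.

Lemma det_pad_submx_gt0 X : 0 < \det (pad_submx A X).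
Proof.
have [k ltXk] := ubnP #|X|; elim: k X ltXk => // k IH X ltXk.
have [->|[i iX]] := set_0Vmem X; first by rewrite det_pad_submx0.
have iXi : i \notin X :\ i by rewrite finset.setD11.
rewrite -(finset.setD1K iX) det_pad_submx_setU1 // mulr_gt0 ?sqdist_gt0 // IH //.
by move: ltXk; rewrite (cardsD1 i X) iX.
Qed.

(* u := proj T y - proj (T :\ j) y lies in the span of T, has j-th coordinate
   c := proj T y 0 j, and is orthogonal to y - proj T y; so '[u] is at most
   sqdist (T :\ j) y, while u / c is e_j minus a vector of the span of T :\ j. *)
Lemma sqr_proj_mul_sqdist_le T y j : j \in T ->
  proj T y 0 j ^+ 2 * sqdist (T :\ j) 'e_j <= sqdist (T :\ j) y.
Proof.
move=> jT; have jTj : j \notin T :\ j by rewrite finset.setD11.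
rewrite {2}/sqdist.
have := @proj_orth T y; have := @proj_supported T y; have := @proj_supported (T :\ j) y.
move: (proj T y) (proj (T :\ j) y) => p z zTj pT oT.
set u := p - z.
have uT : supported T u by apply: supportedB pT _; apply: supportedS zTj; apply: subD1set.
have uj : u 0 j = p 0 j by rewrite !mxE (zTj j jTj) subr0.
have u_le : '[u] <= '[y - z].
  have -> : y - z = (y - p) + u by rewrite addrA subrK.
  by rewrite (formD_orth oT uT) lerDr form_ge0.
clearbody u; have [c0|c0] := eqVneq (p 0 j) 0; first by rewrite c0 expr0n mul0r form_ge0.
apply: (le_trans _ u_le); rewrite -ler_pdivlMl ?exprn_even_gt0 ?c0 ?orbT //.
have -> : (p 0 j ^+ 2)^-1 * '[u] = '['e_j - ('e_j - (p 0 j)^-1 *: u)].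
  by rewrite opprB addrC subrK formZl formZr /= mulrA -expr2 exprVn.
apply: sqdist_le => a; rewrite finset.in_setD1 negb_and negbK => /orP [/eqP ->|aT].
  by rewrite !mxE !eqxx uj mulVf // subrr.
have aj : a != j by apply: contraNneq aT => ->.
by rewrite !mxE (negPf aj) uT // mulr0 subrr.
Qed.

(* Compare y with the vector of the span of X obtained from proj T y by replacing
   each e_j, j in T :\: X, with proj X e_j. *)
Lemma sqdist_exchange X T y :
  sqdist X y <= 2 * sqdist T y +
    2 * 2 ^+ n * \sum_(j in T :\: X) proj T y 0 j ^+ 2 * sqdist X 'e_j.
Proof.
set c := fun j => proj T y 0 j.
pose v := \sum_(j in T :&: X) c j *: 'e_j + \sum_(j in T :\: X) c j *: proj X 'e_j.
have vX : supported X v.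
  apply/supportedP; rewrite mulmxDl !mulmx_suml.
  congr (_ + _); apply: eq_bigr => j jX; rewrite -scalemxAl; congr (_ *: _).
    by apply/supportedP/supported_delta; move: jX; rewrite inE => /andP [].
  by apply/supportedP/proj_supported.
have -> : sqdist T y = '[y - \sum_(j in T) c j *: 'e_j].
  by rewrite -(supported_sum_delta (@proj_supported T y)).
apply: le_trans (sqdist_le y vX) _.
have -> : y - v = (y - \sum_(j in T) c j *: 'e_j) +
                  \sum_(j in T :\: X) c j *: ('e_j - proj X 'e_j).
  rewrite (big_setID X) /= /v.
  under [X in _ = _ + X]eq_bigr do rewrite scalerBr.
  by rewrite sumrB !opprD !addrA subrK.
apply: le_trans (formD_le _ _) _; rewrite lerD2l -mulrA ler_pM2l //.
apply: le_trans (form_sum_le _ _) _; rewrite card_ord ler_pM2l ?exprn_gt0 //.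
by apply/ler_sum => j _; rewrite formZl formZr mulrA -expr2.
Qed.

Local Notation pm X := (\det (pad_submx A X)).

Lemma sqr_proj_mul_det_pad_submx_le T i j : i \notin T -> j \in T ->
  proj T 'e_i 0 j ^+ 2 * pm T <= pm (i |: (T :\ j)).
Proof.
move=> iT jT; have jTj : j \notin T :\ j by rewrite finset.setD11.
have iTj : i \notin T :\ j by rewrite finset.in_setD1 (negPf iT) andbF.
have := det_pad_submx_setU1 jTj; rewrite finset.setD1K // => ->.
rewrite det_pad_submx_setU1 // mulrA ler_pM2r ?det_pad_submx_gt0 //.
exact: sqr_proj_mul_sqdist_le.
Qed.

Lemma det_pad_submx_exchange S T i : i \in S -> i \notin T ->
  pm S * pm T <= 2 * 2 ^+ n *
    (pm (S :\ i) * pm (i |: T) +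
     \sum_(j in T :\: S) pm (j |: (S :\ i)) * pm (i |: (T :\ j))).
Proof.
move=> iS iT; have iX : i \notin S :\ i by rewrite finset.setD11.
have hS := det_pad_submx_setU1 iX; rewrite finset.setD1K // in hS.
set X := S :\ i in iX hS *; set c := proj T 'e_i 0.
have TX : T :\: X = T :\: S.
  apply/setP => j; rewrite !inE.
  by case: (eqVneq j i) => [->|]; rewrite ?(negPf iT) ?andbF.
have K1 : 1 <= 2 ^+ n :> R by rewrite exprn_ege1 // ler1n.
have pmXT : 0 < pm X * pm T by rewrite mulr_gt0 ?det_pad_submx_gt0.
have hj j : j \in T :\: S ->
    c j ^+ 2 * sqdist X 'e_j * (pm X * pm T) <= pm (j |: X) * pm (i |: (T :\ j)).
  rewrite inE => /andP [jS jT].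
  have jX : j \notin X by rewrite finset.in_setD1 negb_and jS orbT.
  rewrite det_pad_submx_setU1 // [c j ^+ 2 * _]mulrC mulrACA.
  rewrite ler_wpM2l ?sqr_proj_mul_det_pad_submx_le //.
  by rewrite mulr_ge0 ?ltW ?sqdist_gt0 ?det_pad_submx_gt0.
have step : pm S * pm T <= 2 * (pm X * pm (i |: T)) +
    2 * 2 ^+ n * \sum_(j in T :\: S) pm (j |: X) * pm (i |: (T :\ j)).
  rewrite hS -(mulrA _ (pm X)).
  have := sqdist_exchange X T 'e_i; rewrite TX => ex.
  apply: le_trans (ler_wpM2r (ltW pmXT) ex) _.
  rewrite mulrDl; apply: lerD.
    by rewrite det_pad_submx_setU1 // le_eqVlt; apply/orP; left; apply/eqP; ring.
  by rewrite -!mulrA !ler_pM2l ?exprn_gt0 // mulr_suml ler_sum.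
apply: le_trans step _; rewrite [X in _ <= X]mulrDr lerD2r -mulrA ler_pM2l //.
by rewrite ler_peMl // mulr_ge0 // ltW // det_pad_submx_gt0.
Qed.

Lemma det_pad_submx_approx_Mnat :
  approx_Mnat_logconcave (2 * 2 ^+ n * n.+1%:R) (fun X => pm X).
Proof.
move=> S T i; rewrite inE => /andP [iT iS].
have := det_pad_submx_exchange iS iT; rewrite mulrDr mulr_sumr => hex.
have ge0 : 0 <= 2 * 2 ^+ n * (pm (S :\ i) * pm (i |: T)).
  by rewrite mulr_ge0 ?mulr_ge0 ?exprn_ge0 ?ltW ?det_pad_submx_gt0.
have [h|[j jJ h]] := le_card_mul_summand ge0 hex; rewrite card_ord mulrCA mulrA in h.
  by left.
by right; exists j.
Qed.

End PositiveDefiniteForm.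

Lemma PMplus_approx_Mnat (R : realType) n (G : {set 'I_n} -> R) : @PMplus R n G ->
  (forall X, 0 < G X) /\ approx_Mnat_logconcave (2 * 2 ^+ n * n.+1%:R) G.
Proof.
case=> A [[symA posA] ->].
have -> : principal_minor A = fun X => \det (pad_submx A X).
  by apply: funext => X; apply: principal_minorE.
by split; [apply: det_pad_submx_gt0 | apply: det_pad_submx_approx_Mnat].
Qed.

Local Open Scope classical_set_scope.

Lemma logb_cvg_gt0_near (R : realType) (t z : R^nat) (g M : R) :
  t @ \oo --> +oo -> (forall k, 0 < z k) -> 0 < g ->
  (fun k => logb (t k) (z k)) @ \oo --> g -> \forall k \near \oo, M < z k.
Proof.
move=> tinf z0 g0 cz; have [M0|M0] := lerP M 0.
  by apply: nearW => k; apply: le_lt_trans M0 (z0 k).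
near=> k.
have tk : Num.max 1 (expR (2 * ln M / g)) < t k by near: k; apply: cvgry_gt.
have zk : g / 2 < logb (t k) (z k).
  near: k; apply: (@cvgr_gt _ _ _ _ (fun x => logb (t x) (z x)) g cz); lra.
move: tk; rewrite gt_max => /andP [t1 tM].
have lnt0 : 0 < ln (t k) by apply: ln_gt0.
have lnMt : 2 * ln M / g < ln (t k).
  by rewrite -[X in X < _]expRK ltr_ln ?posrE ?expR_gt0 ?(lt_trans ltr01).
rewrite -ltr_ln ?posrE //.
have -> : ln (z k) = logb (t k) (z k) * ln (t k) by rewrite /logb divfK ?gt_eqF.
move: lnMt; rewrite ltr_pdivrMr // => lnMt; nra.
Unshelve. all: by end_near.
Qed.

Lemma trop_mul_lt_near (R : realType) (I : Type) (t : R^nat) (x : nat -> I -> R)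
    (y : I -> R) (M : R) (S T U V : I) :
  t @ \oo --> +oo -> (forall k X, 0 < x k X) ->
  (forall X, ((fun k => logb (t k) (x k X)) : R^nat) @ \oo --> (y X : R)) ->
  y U + y V < y S + y T -> \forall k \near \oo, M * (x k U * x k V) < x k S * x k T.
Proof.
move=> tinf x0 cx gap.
have xpos k X : x k X \in Num.pos by rewrite posrE.
pose z k := x k S * x k T / (x k U * x k V).
have logbz : (fun k => logb (t k) (z k)) =
    fun k => logb (t k) (x k S) + logb (t k) (x k T) -
             (logb (t k) (x k U) + logb (t k) (x k V)).
  apply: funext => k; rewrite /z /logb lnM ?rpredV ?rpredM ?xpos //.
  by rewrite lnV ?rpredM ?xpos // !lnM ?xpos //; ring.
have : \forall k \near \oo, M < z k.
  apply: (@logb_cvg_gt0_near _ t z (y S + y T - (y U + y V)) M tinf).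
  - by move=> m; apply: divr_gt0; apply: mulr_gt0; apply: x0.
  - by rewrite subr_gt0.
  - by rewrite logbz; apply: cvgB; apply: cvgD.
by apply: filterS => k; rewrite /z ltr_pdivlMr // mulr_gt0.
Qed.

Lemma trop_Mnat_concave (R : realType) n (P : set ({set 'I_n} -> R)) (K : R) :
  (forall G, P G -> (forall X, 0 < G X) /\ approx_Mnat_logconcave K G) ->
  trop P `<=` [set F | Mnat_concave F].
Proof.
move=> hP F [t [x [tinf [Px cvF]]]] S T i iST.
have x0 k X : 0 < x k X := (hP _ (Px k)).1 X.
have lt_near U V : F U + F V < F S + F T ->
    \forall k \near \oo, K * (x k U * x k V) < x k S * x k T.
  exact: (trop_mul_lt_near K tinf x0 cvF).
have [|lt0] := lerP (F S + F T) (F (S :\ i) + F (i |: T)); first by left.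
have [|leJ] := pselect (exists2 j, j \in T :\: S &
  F S + F T <= F (j |: (S :\ i)) + F (i |: (T :\ j))); first by right.
suff : \forall k \near \oo, False by case/filter_ex.
have ltJ j : j \in T :\: S -> F (j |: (S :\ i)) + F (i |: (T :\ j)) < F S + F T.
  by move=> jJ; rewrite ltNge; apply/negP => h; apply: leJ; exists j.
near=> k.
have h0 : K * (x k (S :\ i) * x k (i |: T)) < x k S * x k T by near: k; apply: lt_near.
have hJ j : j \in T :\: S ->
    K * (x k (j |: (S :\ i)) * x k (i |: (T :\ j))) < x k S * x k T.
  move: j; near: k; apply: filter_forall => j.
  have [/ltJ/lt_near|_] := boolP (j \in T :\: S); last exact: nearW.
  by apply: filterS => k hk _.
by case: ((hP _ (Px k)).2 S T i iST) => [|[j /hJ hj]]; rewrite leNgt ?h0 ?hj.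
Unshelve. all: by end_near.
Qed.

Theorem proposition2p1 (R : realType) (n : nat) :
  trop (@PMplus R n) `<=` [set F | Mnat_concave F].
Proof. exact: trop_Mnat_concave (@PMplus_approx_Mnat R n). Qed.
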